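(* Let $W:A^{\mathbb{Z}}\times\mathcal{B}^{\mathbb{Z}}\to\mathbb{C}$ be a cq-channel and $K:\mathcal{B}^{\mathbb{Z}}\to B(A^{\mathbb{Z}},\Sigma_c)$, $(K(b))(x)=W(x,b)$, the associated map. (a) The following are equivalent: (1) $K(\mathcal{B}^{\mathbb{Z}})\subseteq C(A^{\mathbb{Z}})$; (2) for each $b\in\mathcal{B}^{\mathbb{Z}}$, $\lim_{n\to\infty}\sup_{x,y\in A^{\mathbb{Z}}:\,x_{-n}^{n}=y_{-n}^{n}}|W(x,b)-W(y,b)|=0$. (b) If $W$ has decaying input memory and anticipation (DIMA), then $K(\mathcal{B}^{\mathbb{Z}})\subseteq C(A^{\mathbb{Z}})$.
   Context: $A$ finite, $\mathcal{B}=\mathcal{L}(\mathcal{H})$ with $\mathcal{H}$ finite-dimensional, $\mathcal{B}^{\mathbb{Z}}$ the quasi-local $C^*$-algebra (norm completion of the union of $\mathcal{B}^{[n,m]}=\bigotimes_{i=n}^m\mathcal{B}$ with natural embeddings). $\Sigma_c$ is the Borel (= cylinder) $\sigma$-field of $A^{\mathbb{Z}}$ with product topology, $B(A^{\mathbb{Z}},\Sigma_c)$ bounded Borel functions, $C(A^{\mathbb{Z}})$ continuous functions. $x_{n}^{m}=(x_n,\dots,x_m)$. A cq-channel is $W:A^{\mathbb{Z}}\times\mathcal{B}^{\mathbb{Z}}\to\mathbb{C}$ with $x\mapsto W(x,b)$ Borel measurable and $b\mapsto W(x,b)$ a state. $W$ is DIMA if for every $\varepsilon>0$ there are nonnegative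 integers $m(\varepsilon),a(\varepsilon)$ such that for all $n\in\mathbb{Z}$, $k\in\mathbb{N}$, all $b\in\mathcal{B}^{[n,n+k]}$ with $0\le b\le\mathbf{1}$, and all $m\ge m(\varepsilon)$, $a\ge a(\varepsilon)$: $|W(x,b)-W(x',b)|\le\varepsilon$ whenever $x_i=x'_i$ for $n-m\le i\le n+k+a$. *)

From HB Require Import structures.
From mathcomp Require Import all_boot all_order all_algebra.
From mathcomp Require Import all_classical all_reals all_analysis.
From mathcomp Require Import complex mxtens.
Import Order.TTheory GRing.Theory Num.Theory.
Import numFieldNormedType.Exports.

Set Implicit Arguments.
Unset Strict Implicit.
Unset Printing Implicit Defensive.

Local Open Scope ring_scope.
Local Open Scope classical_set_scope.

(** The complex numbers over a real type, packaged as a numClosedFieldType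
    (so that the normed/topological structure of MathComp-Analysis applies). *)
Definition Cx (R : realType) : numClosedFieldType := R[i].

Definition cabs (R : realType) (z : Cx R) : R := ComplexField.Normc.normc (z : R[i]).

Notation confs A := {ptws int -> discrete_topology A}.

Definition mxadj (R : realType) m (M : 'M[Cx R]_m) : 'M[Cx R]_m :=
  map_mx (fun z => Num.conj z) M^T.

(** B^[n, n+k] (k+1 sites, each with L(H), H = C^d) is
    identified with 'M_(d ^ k.+1) (Kronecker product of the site algebras,
    leftmost site = leftmost tensor factor).
    [ext_right M] : B^[n,n+k] -> B^[n,n+k+1],   M |-> M (x) 1
    [ext_left  M] : B^[n,n+k] -> B^[n-1,n+k],   M |-> 1 (x) M               *)
Definition ext_right (R : realType) (d k : nat) (M : 'M[Cx R]_(d ^ k.+1))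
  : 'M[Cx R]_(d ^ k.+2) :=
  castmx (esym (expnSr d k.+1), esym (expnSr d k.+1))
         (M *t (1%:M : 'M[Cx R]_d)).

Definition ext_left (R : realType) (d k : nat) (M : 'M[Cx R]_(d ^ k.+1))
  : 'M[Cx R]_(d ^ k.+2) :=
  castmx (esym (expnS d k.+1), esym (expnS d k.+1))
         ((1%:M : 'M[Cx R]_d) *t M).

(** The quasi-local C*-algebra B^Z, B = L(H), dim H = d, given through its
    defining (universal) data: a unital C*-algebra together with compatible
    injective unital *-homomorphisms  qla_loc n k : B^[n,n+k] -> B^Z
    (compatible with the natural embeddings B^[n,m] -> B^[n',m']) whose
    images have dense union.  This characterizes the C*-inductive limit
    (norm completion of the union of the local algebras) up to isometric
    *-isomorphism. *)
Unset Implicit Arguments.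
Record quasi_local_algebra (R : realType) (d : nat) := QuasiLocal {
  qla_car :> algType (Cx R);
  qla_star : qla_car -> qla_car;
  qla_norm : qla_car -> R;
  qla_loc : int -> forall k : nat, 'M[Cx R]_(d ^ k.+1) -> qla_car;
  qla_starD : forall x y, qla_star (x + y) = qla_star x + qla_star y;
  qla_starZ : forall (a : Cx R) x, qla_star (a *: x) = Num.conj a *: qla_star x;
  qla_starM : forall x y, qla_star (x * y) = qla_star y * qla_star x;
  qla_starK : forall x, qla_star (qla_star x) = x;
  qla_norm_ge0 : forall x, 0 <= qla_norm x;
  qla_norm_eq0 : forall x, qla_norm x = 0 -> x = 0;
  qla_normD : forall x y, qla_norm (x + y) <= qla_norm x + qla_norm y;
  qla_normZ : forall (a : Cx R) x, qla_norm (a *: x) = cabs a * qla_norm x;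
  qla_normM : forall x y, qla_norm (x * y) <= qla_norm x * qla_norm y;
  qla_Cstar : forall x, qla_norm (qla_star x * x) = qla_norm x ^+ 2;
  qla_complete : forall u : nat -> qla_car,
    (forall e : R, 0 < e -> exists N : nat, forall p q : nat,
        (N <= p)%N -> (N <= q)%N -> qla_norm (u p - u q) < e) ->
    exists l : qla_car, forall e : R, 0 < e -> exists N : nat, forall p : nat,
        (N <= p)%N -> qla_norm (u p - l) < e;
  qla_loc_lin : forall n k (a : Cx R) (M N : 'M[Cx R]_(d ^ k.+1)),
    qla_loc n k (a *: M + N) = a *: qla_loc n k M + qla_loc n k N;
  qla_loc_mul : forall n k (M N : 'M[Cx R]_(d ^ k.+1)),
    qla_loc n k (M *m N) = qla_loc n k M * qla_loc n k N;
  qla_loc_one : forall n k, qla_loc n k 1%:M = 1;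
  qla_loc_adj : forall n k (M : 'M[Cx R]_(d ^ k.+1)),
    qla_loc n k (mxadj M) = qla_star (qla_loc n k M);
  qla_loc_inj : forall n k, injective (qla_loc n k);
  qla_loc_right : forall n k (M : 'M[Cx R]_(d ^ k.+1)),
    qla_loc n k M = qla_loc n k.+1 (ext_right M);
  qla_loc_left : forall n k (M : 'M[Cx R]_(d ^ k.+1)),
    qla_loc n k M = qla_loc (n - 1) k.+1 (ext_left M);
  qla_dense : forall (x : qla_car) (e : R), 0 < e ->
    exists n k (M : 'M[Cx R]_(d ^ k.+1)), qla_norm (x - qla_loc n k M) < e
}.
Set Implicit Arguments.
Arguments qla_car {R d}.
Arguments qla_star {R d}.
Arguments qla_norm {R d}.
Arguments qla_loc {R d}.

Section Defs.
Variables (R : realType) (d : nat) (B : quasi_local_algebra R d) (A : finType).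

Definition is_local (n : int) (k : nat) (b : B) :=
  exists M : 'M[Cx R]_(d ^ k.+1), b = qla_loc B n k M.

Definition qla_pos (b : B) := exists c : B, b = qla_star B c * c.

Definition is_state (phi : B -> Cx R) :=
  [/\ forall (a : Cx R) (x y : B), phi (a *: x + y) = a * phi x + phi y,
      forall c : B, 0 <= phi (qla_star B c * c)
    & phi 1 = 1].

Definition borel_conf : set (set (confs A)) := <<s open >>.

Definition borel_measurable (f : confs A -> Cx R) :=
  forall U : set (Cx R), <<s open >> U -> borel_conf (f @^-1` U).

Definition cq_channel (W : confs A -> B -> Cx R) :=
  (forall b : B, borel_measurable (fun x => W x b)) /\
  (forall x : confs A, is_state (W x)).

Definition K (W : confs A -> B -> Cx R) (b : B) : confs A -> Cx R :=
  fun x => W x b.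

Definition osc (W : confs A -> B -> Cx R) (b : B) (n : nat) : R :=
  sup [set r : R | exists x y : confs A,
        (forall i : int, - (n%:Z) <= i <= n%:Z -> x i = y i) /\
        r = cabs (W x b - W y b)].

Definition DIMA (W : confs A -> B -> Cx R) :=
  forall e : R, 0 < e -> exists m0 a0 : nat,
    forall (n : int) (k : nat) (b : B),
      is_local n k b -> qla_pos b -> qla_pos (1 - b) ->
      forall m a : nat, (m0 <= m)%N -> (a0 <= a)%N ->
      forall x x' : confs A,
        (forall i : int, n - m%:Z <= i <= n + k%:Z + a%:Z -> x i = x' i) ->
        cabs (W x b - W x' b) <= e.

End Defs.

From HB Require Import structures.
From mathcomp Require Import all_boot all_order all_algebra.
From mathcomp Require Import all_classical all_reals all_analysis.
From mathcomp Require Import complex mxtens.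
From mathcomp Require Import zify ring lra.
Import Order.TTheory GRing.Theory Num.Theory.
Import numFieldNormedType.Exports.
Local Open Scope ring_scope.
Local Open Scope classical_set_scope.

(* A function on the compact space A^Z is continuous iff its oscillation over
   the cylinders x_{-n}^n = y_{-n}^n tends to 0: cylinders form a
   neighbourhood base, and conversely continuity is uniform by compactness.
   Under DIMA, W(., u) varies little on long cylinders, uniformly over the
   local effects 0 <= u <= 1 of a fixed B^[n, n+k].  Every local b is a fixed
   linear combination of such effects: b = s1 + i s2 with s1, s2 self-adjoint,
   and s = (u - 1/2)/t for the effect u = 1/2 + t s once ||t s|| <= 1/4.  A
   general b is a norm limit of local elements and states are bounded
   (|phi b| <= 2 ||b||), so continuity passes to the limit.  Both the bound on
   states and the positivity of 1/2 +- t s rest on one fact: if x is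
   self-adjoint with ||x|| <= 3/4, then 1 - x = (1 - l)^* (1 - l), where l is
   the limit of the contraction y |-> (x + y^2)/2 iterated from 0. *)

Section ComplexModulus.
Context {R : realType}.
Implicit Types z w : Cx R.

Lemma cabsE z : ((cabs z)%:C)%C = `|z|.
Proof. by []. Qed.

Lemma cabs_ge0 z : 0 <= cabs z.
Proof. by rewrite -lecR cabsE normr_ge0. Qed.

Lemma cabs0 : cabs (0 : Cx R) = 0.
Proof. exact: Normc.normc0. Qed.

Lemma cabs1 : cabs (1 : Cx R) = 1.
Proof. exact: Normc.normc1. Qed.

Lemma cabsN z : cabs (- z) = cabs z.
Proof. exact: normcN. Qed.

Lemma cabsM z w : cabs (z * w) = cabs z * cabs w.
Proof. exact: Normc.normcM. Qed.

Lemma cabs_real (r : R) : cabs ((r%:C)%C : Cx R) = `|r|.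
Proof. by rewrite /cabs /= expr0n /= addr0 sqrtr_sqr. Qed.

Lemma ler_cabsD z w : cabs (z + w) <= cabs z + cabs w.
Proof. exact: le_normcD. Qed.

Lemma ler_cabsB z w : cabs (z - w) <= cabs z + cabs w.
Proof. by rewrite -(cabsN w) ler_cabsD. Qed.

Lemma conjC_real (r : R) : ((r%:C)%C : Cx R)^* = (r%:C)%C.
Proof. exact: conjc_real. Qed.

Lemma halfCD : ((2^-1 : R)%:C)%C + ((2^-1 : R)%:C)%C = 1 :> Cx R.
Proof. by rewrite -rmorphD /= -[X in X + _]mul1r -[X in _ + X]mul1r -splitr. Qed.

End ComplexModulus.

Section CstarAlgebra.
Context {R : realType} {d : nat} {B : quasi_local_algebra R d}.
Local Notation star := (qla_star B).
Local Notation nrm := (qla_norm B).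
Implicit Types x y a b l : B.

Lemma qla_star1 : star 1 = 1.
Proof. by have := qla_starM _ _ B (star 1) 1; rewrite mulr1 !qla_starK mulr1. Qed.

Lemma qla_star0 : star 0 = 0.
Proof. by rewrite -(scale0r (0 : B)) qla_starZ rmorph0 !scale0r. Qed.

Lemma qla_starN x : star (- x) = - star x.
Proof. by rewrite -scaleN1r qla_starZ rmorphN1 scaleN1r. Qed.

Lemma qla_starB x y : star (x - y) = star x - star y.
Proof. by rewrite qla_starD qla_starN. Qed.

Lemma qla_norm0 : nrm 0 = 0.
Proof. by rewrite -(scale0r (0 : B)) qla_normZ cabs0 mul0r. Qed.

Lemma qla_normZr (r : R) x : nrm ((r%:C)%C *: x) = `|r| * nrm x.
Proof. by rewrite qla_normZ cabs_real. Qed.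

Lemma qla_normN x : nrm (- x) = nrm x.
Proof. by rewrite -scaleN1r qla_normZ cabsN cabs1 mul1r. Qed.

Lemma ler_qla_normB x y : nrm (x - y) <= nrm x + nrm y.
Proof. by rewrite -(qla_normN y) qla_normD. Qed.

Lemma qla_norm_star x : nrm (star x) = nrm x.
Proof.
suff le_star z : nrm z <= nrm (star z).
  apply/le_anti/andP; split; last exact: le_star.
  by rewrite -{2}(qla_starK _ _ B x) le_star.
have := qla_normM _ _ B (star z) z; rewrite qla_Cstar.
have := qla_norm_ge0 _ _ B z; have := qla_norm_ge0 _ _ B (star z); nra.
Qed.

Lemma qla_norm1 : nrm 1 <= 1.
Proof.
have := qla_Cstar _ _ B 1; rewrite qla_star1 mul1r.
have := qla_norm_ge0 _ _ B 1; nra.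
Qed.

Lemma qla_norm_le0 x : (forall e : R, 0 < e -> nrm x <= e) -> x = 0.
Proof.
move=> x_small; apply: qla_norm_eq0; apply/le_anti.
rewrite qla_norm_ge0 andbT; apply/ler_addgt0Pr => e e0; rewrite add0r.
exact: x_small.
Qed.

Definition qla_cvg (u : nat -> B) l :=
  forall e : R, 0 < e -> exists N, forall p, (N <= p)%N -> nrm (u p - l) < e.

Lemma qla_cvg_geometric {u : nat -> B} :
  (forall n, nrm (u n.+1 - u n) <= (2^-1) ^+ n.+1) -> exists l, qla_cvg u l.
Proof.
move=> u_step; apply: qla_complete => e e0.
have u_tail p m : nrm (u (p + m)%N - u p) <= (2^-1) ^+ p - (2^-1) ^+ (p + m).
  elim: m => [|m IH]; first by rewrite addn0 !subrr qla_norm0.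
  rewrite -(subrK (u (p + m)%N) (u _)) -addrA addnS.
  apply: le_trans (qla_normD _ _ B _ _) _.
  have := u_step (p + m)%N; rewrite exprS; lra.
have [N _ HN] := near_infty_natSinv_expn_lt (PosNum e0).
have u_close p q : (N <= p)%N -> (p <= q)%N -> nrm (u q - u p) < e.
  move=> Np /subnKC <-; apply: le_lt_trans (u_tail p (q - p)%N) _.
  have : (2^-1 : R) ^+ p <= (2^-1) ^+ N.
    by apply: ler_wiXn2l => //; rewrite ?invr_ge0 ?ler0n ?invf_le1 ?ler1n.
  have := HN N (leqnn N); rewrite /= mul1r -exprVn.
  have : 0 <= (2^-1 : R) ^+ (p + (q - p)) by rewrite exprn_ge0 ?invr_ge0.
  lra.
exists N => p q Np Nq; have [pq|/ltnW qp] := leqP p q.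
  by rewrite -qla_normN opprB; apply: u_close.
exact: u_close.
Qed.

Lemma qla_cvg_norm_le {u : nat -> B} {l} {c : R} :
  qla_cvg u l -> (forall n, nrm (u n) <= c) -> nrm l <= c.
Proof.
move=> ul u_le; apply/ler_addgt0Pr => e e0.
have [N HN] := ul e e0; have := HN N (leqnn N).
have := qla_normD _ _ B (- (u N - l)) (u N); rewrite qla_normN opprB subrK.
have := u_le N; lra.
Qed.

Lemma qla_cvg_star {u : nat -> B} {l} :
  qla_cvg u l -> (forall n, star (u n) = u n) -> star l = l.
Proof.
move=> ul u_sa; apply/eqP; rewrite -subr_eq0; apply/eqP/qla_norm_le0 => e e0.
have [N HN] := ul (e / 2) (divr_gt0 e0 (ltr0n _ 2)); have uN := HN N (leqnn N).
have -> : star l - l = - star (u N - l) + (u N - l).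
  by rewrite qla_starB u_sa opprB addrA subrK.
apply: le_trans (qla_normD _ _ B _ _) _; rewrite qla_normN qla_norm_star; lra.
Qed.

Lemma qla_cvg_fixpoint {u : nat -> B} {l} {f : B -> B} :
  qla_cvg u l -> (forall n, u n.+1 = f (u n)) ->
  (forall n, nrm (f l - f (u n)) <= nrm (l - u n)) -> f l = l.
Proof.
move=> ul u_rec f_lip; apply/eqP; rewrite -subr_eq0; apply/eqP/qla_norm_le0 => e e0.
have [N HN] := ul (e / 2) (divr_gt0 e0 (ltr0n _ 2)).
have uN := HN N (leqnn N); have uSN := HN N.+1 (leqnSn N).
rewrite -qla_normN opprB in uN.
have -> : f l - l = (f l - f (u N)) + (u N.+1 - l) by rewrite u_rec addrA subrK.
apply: le_trans (qla_normD _ _ B _ _) _; have := f_lip N; lra.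
Qed.

Definition sqrt_step x y : B := ((2^-1 : R)%:C)%C *: (x + y * y).

Definition sqrt_iter x n : B := iter n (sqrt_step x) 0.

Lemma sqrt_step_contract x {a b} : nrm a <= 2^-1 -> nrm b <= 2^-1 ->
  nrm (sqrt_step x a - sqrt_step x b) <= 2^-1 * nrm (a - b).
Proof.
move=> a_le b_le.
have -> : sqrt_step x a - sqrt_step x b =
    ((2^-1 : R)%:C)%C *: (a * (a - b) + (a - b) * b).
  by rewrite -scalerBr (addrC x) addrKA mulrBr mulrBl addrA subrK.
rewrite qla_normZr ger0_norm ?invr_ge0 ?ler0n //.
apply: ler_wpM2l; first by rewrite invr_ge0 ler0n.
apply: le_trans (qla_normD _ _ B _ _) _.
have := qla_normM _ _ B a (a - b); have := qla_normM _ _ B (a - b) b.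
have := qla_norm_ge0 _ _ B (a - b); nra.
Qed.

Lemma sqrt_step_norm x y : nrm x <= 3/4 -> nrm y <= 2^-1 ->
  nrm (sqrt_step x y) <= 2^-1.
Proof.
move=> x_le y_le; rewrite qla_normZr ger0_norm ?invr_ge0 ?ler0n //.
have := qla_normD _ _ B x (y * y); have := qla_normM _ _ B y y.
have := qla_norm_ge0 _ _ B y; nra.
Qed.

Lemma sqrt_step_star x y : star x = x -> star y = y ->
  star (sqrt_step x y) = sqrt_step x y.
Proof.
by move=> x_sa y_sa; rewrite qla_starZ conjC_real qla_starD qla_starM x_sa y_sa.
Qed.

Lemma sqrt_step_fixpoint x l : sqrt_step x l = l -> star l = l ->
  1 - x = star (1 - l) * (1 - l).
Proof.
move=> l_fix l_sa.
have -> : x = l *+ 2 - l * l.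
  by rewrite mulr2n -{1 2}l_fix -scalerDl halfCD scale1r addrK.
rewrite qla_starB qla_star1 l_sa mulrBl mul1r !mulrBr mulr1.
by rewrite !opprB mulr2n opprD !addrA addrAC.
Qed.

Lemma sqrt_iter_star {x} : star x = x -> forall n, star (sqrt_iter x n) = sqrt_iter x n.
Proof.
move=> x_sa; elim=> [|n IH]; last exact: sqrt_step_star.
exact: qla_star0.
Qed.

Section SqrtIter.
Context {x : B}.
Hypothesis x_le : nrm x <= 3/4.

Lemma sqrt_iter_norm n : nrm (sqrt_iter x n) <= 2^-1.
Proof.
elim: n => [|n IH]; first by rewrite qla_norm0 invr_ge0 ler0n.
exact: sqrt_step_norm.
Qed.

Lemma sqrt_iter_stepB n :
  nrm (sqrt_iter x n.+1 - sqrt_iter x n) <= (2^-1) ^+ n.+1.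
Proof.
elim: n => [|n IH].
  rewrite subr0 /= /sqrt_step mulr0 addr0 qla_normZr.
  by rewrite ger0_norm ?invr_ge0 ?ler0n // expr1; have := x_le; lra.
apply: le_trans (sqrt_step_contract x (sqrt_iter_norm n.+1) (sqrt_iter_norm n)) _.
by rewrite [_ ^+ n.+2]exprS ler_wpM2l // invr_ge0 ler0n.
Qed.

End SqrtIter.

Lemma qla_pos_1B {x} : star x = x -> nrm x <= 3/4 -> qla_pos (1 - x).
Proof.
move=> x_sa x_le.
have [l ul] := qla_cvg_geometric (sqrt_iter_stepB x_le).
have l_le := qla_cvg_norm_le ul (sqrt_iter_norm x_le).
have l_sa := qla_cvg_star ul (sqrt_iter_star x_sa).
have l_fix : sqrt_step x l = l.
  apply: (qla_cvg_fixpoint ul) => // n.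
  apply: le_trans (sqrt_step_contract x l_le (sqrt_iter_norm x_le n)) _.
  have := qla_norm_ge0 _ _ B (l - sqrt_iter x n); lra.
by exists (1 - l); apply: sqrt_step_fixpoint.
Qed.

End CstarAlgebra.

Section States.
Context {R : realType} {d : nat} {B : quasi_local_algebra R d} {phi : B -> Cx R}.
Hypothesis phi_state : is_state phi.
Local Notation star := (qla_star B).
Local Notation nrm := (qla_norm B).
Implicit Types x y b c : B.

Lemma stateD x y : phi (x + y) = phi x + phi y.
Proof. by case: phi_state => lin _ _; rewrite -{1}[x]scale1r lin mul1r. Qed.

Lemma state0 : phi 0 = 0.
Proof. by apply: (addrI (phi 0)); rewrite -stateD !addr0. Qed.

Lemma stateZ a x : phi (a *: x) = a * phi x.
Proof. by case: phi_state => lin _ _; rewrite -[a *: x]addr0 lin state0 !addr0. Qed.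

Lemma stateN x : phi (- x) = - phi x.
Proof. by rewrite -scaleN1r stateZ mulN1r. Qed.

Lemma stateB x y : phi (x - y) = phi x - phi y.
Proof. by rewrite stateD stateN. Qed.

Lemma state1 : phi 1 = 1.
Proof. by case: phi_state. Qed.

Lemma state_ge0 c : 0 <= phi (star c * c).
Proof. by case: phi_state. Qed.

Lemma state_le {x y} : qla_pos (y - x) -> phi x <= phi y.
Proof. by case=> c yx; rewrite -subr_ge0 -stateB yx state_ge0. Qed.

Lemma state_star b : phi (star b) = (phi b)^*.
Proof.
(* Polarization: [phi (star c * c)] is real for [c = 1 + b] and [c = 1 + 'i b]. *)
have real_sq c : (phi (star c * c))^* = phi (star c * c).
  exact/conj_Creal/ger0_real/state_ge0.
set p := phi b; set q := phi (star b); set s := phi (star b * b).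
have r1 := real_sq (1 + b).
have E1 : star (1 + b) * (1 + b) = 1 + b + star b + star b * b.
  by rewrite qla_starD qla_star1 mulrDl !mulrDr !mul1r mulr1 !addrA.
rewrite E1 !stateD state1 -/p -/q -/s !rmorphD /= real_sq conjC1 in r1.
have r2 := real_sq (1 + 'i *: b).
have E2 : star (1 + 'i *: b) * (1 + 'i *: b) =
    1 + 'i *: b - 'i *: star b + star b * b.
  rewrite qla_starD qla_star1 qla_starZ conjCi mulrDl !mulrDr !mul1r mulr1.
  rewrite -scalerAl -scalerAr scalerA mulNr -expr2 sqrCi opprK scale1r.
  by rewrite scaleNr !addrA.
rewrite E2 stateD stateB stateD !stateZ state1 -/p -/q -/s in r2.
rewrite !rmorphD !rmorphN !rmorphM /= real_sq conjC1 conjCi in r2.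
have sum_eq : p^* + q^* = p + q.
  by move: r1; rewrite -!addrA => /addrI; rewrite !addrA => /addIr.
have diff_eq : q^* - p^* = p - q.
  have /eqP : 'i * (q^* - p^* - (p - q)) = 0.
    have -> : 'i * (q^* - p^* - (p - q)) =
        (1 + - 'i * p^* - - 'i * q^* + s) - (1 + 'i * p - 'i * q + s) by ring.
    by rewrite r2 subrr.
  by rewrite mulf_eq0 (negbTE (@neq0Ci (Cx R))) subr_eq0 => /eqP.
suff <- : q^* = p by rewrite conjCK.
apply: (@mulfI _ 2); first by rewrite pnatr_eq0.
have -> : 2 * q^* = (p^* + q^*) + (q^* - p^*) by ring.
by rewrite sum_eq diff_eq; ring.
Qed.

Lemma state_CauchySchwarz b : `|phi b| ^+ 2 <= phi (star b * b).
Proof.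
set l := phi b.
have := state_ge0 (b - l *: 1).
have -> : star (b - l *: 1) * (b - l *: 1) =
    star b * b - l *: star b - l^* *: b + (l^* * l) *: 1.
  rewrite qla_starB qla_starZ qla_star1 mulrBl !mulrBr -!scalerAl -!scalerAr.
  by rewrite !mulr1 !mul1r scalerA opprB !addrA addrAC.
rewrite stateD !stateB !stateZ state1 state_star -/l mulr1 normCK.
have -> : phi (star b * b) - l * l^* - l^* * l + l^* * l =
  phi (star b * b) - l * l^* by ring.
by rewrite subr_ge0.
Qed.

Lemma state_norm_le b : cabs (phi b) <= 2 * nrm b.
Proof.
have [->|b_neq0] := eqVneq b 0; first by rewrite state0 cabs0 qla_norm0 mulr0.
have nb_gt0 : 0 < nrm b.
  by rewrite lt_def qla_norm_ge0 andbT; apply: contra_neq b_neq0; apply: qla_norm_eq0.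
pose a : R := 3 / 4 / nrm b ^+ 2.
have a_gt0 : 0 < a by rewrite divr_gt0 // exprn_gt0.
have anb : a * nrm b ^+ 2 = 3 / 4 by rewrite divfK // expf_neq0 // gt_eqF.
have x_sa : star ((a%:C)%C *: (star b * b)) = (a%:C)%C *: (star b * b).
  by rewrite qla_starZ conjC_real qla_starM qla_starK.
have x_le : nrm ((a%:C)%C *: (star b * b)) <= 3 / 4.
  by rewrite qla_normZr qla_Cstar ger0_norm ?anb // ltW.
have aC_ge0 : 0 <= (a%:C)%C :> Cx R by rewrite lecR ltW.
have := state_le (qla_pos_1B x_sa x_le); rewrite state1 stateZ => ax_le1.
have := le_trans (ler_wpM2l aC_ge0 (state_CauchySchwarz b)) ax_le1.
rewrite -cabsE -rmorphXn -rmorphM (_ : 1 = (1%:C)%C) // lecR => ar_le.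
have := cabs_ge0 (phi b); nra.
Qed.

End States.

Section LocalEffects.
Context {R : realType} {d : nat} {B : quasi_local_algebra R d}.
Local Notation star := (qla_star B).
Local Notation nrm := (qla_norm B).
Implicit Types (n : int) (k : nat) (b s u : B).

Definition local_effect n k u := [/\ is_local n k u, qla_pos u & qla_pos (1 - u)].

Lemma qla_loc0 n k : qla_loc B n k 0 = 0.
Proof.
have := qla_loc_lin _ _ B n k 1 0 0; rewrite !scale1r addr0 => loc00.
by apply: (addrI (qla_loc B n k 0)); rewrite addr0 -loc00.
Qed.

Lemma is_localZ {n k} a {b} : is_local n k b -> is_local n k (a *: b).
Proof.
by case=> M ->; exists (a *: M); rewrite -[a *: M]addr0 qla_loc_lin qla_loc0 addr0.
Qed.

Lemma is_localD {n k b1 b2} : is_local n k b1 -> is_local n k b2 -> is_local n k (b1 + b2).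
Proof.
by case=> M -> [N ->]; exists (M + N); rewrite -[M]scale1r qla_loc_lin !scale1r.
Qed.

Lemma is_localB {n k b1 b2} : is_local n k b1 -> is_local n k b2 -> is_local n k (b1 - b2).
Proof. by move=> lb1 lb2; rewrite -scaleN1r; apply: is_localD => //; apply: is_localZ. Qed.

Lemma is_local1 n k : is_local n k (1 : B).
Proof. by exists 1%:M; rewrite qla_loc_one. Qed.

Lemma is_local_star {n k b} : is_local n k b -> is_local n k (star b).
Proof. by case=> M ->; exists (mxadj M); rewrite qla_loc_adj. Qed.

Lemma local_effect_of_small {n k u} :
  is_local n k u -> star u = u -> nrm u <= 3/4 -> nrm (1 - u) <= 3/4 ->
  local_effect n k u.
Proof.
move=> lu u_sa u_le u1_le; split=> //; last exact: qla_pos_1B.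
rewrite -[u in qla_pos u](subKr 1); apply: (qla_pos_1B _ u1_le).
by rewrite qla_starB qla_star1 u_sa.
Qed.

Lemma local_effect_half_shift {n k s} :
  is_local n k s -> star s = s -> nrm s <= 4^-1 ->
  local_effect n k (((2^-1 : R)%:C)%C *: 1 + s).
Proof.
move=> ls s_sa s_le; set h : Cx R := ((2^-1 : R)%:C)%C.
have h1_le : nrm (h *: 1) <= 2^-1.
  rewrite qla_normZr ger0_norm ?invr_ge0 ?ler0n //.
  have := @qla_norm1 _ _ B; have := qla_norm_ge0 _ _ B 1; lra.
apply: local_effect_of_small.
- by apply: is_localD => //; apply/is_localZ/is_local1.
- by rewrite qla_starD qla_starZ conjC_real qla_star1 s_sa.
- by apply: le_trans (qla_normD _ _ B _ _) _; lra.
- have -> : 1 - (h *: 1 + s) = h *: 1 - s.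
    by rewrite opprD addrA -{1}(scale1r 1) -scalerBl -halfCD addrK.
  by apply: le_trans (ler_qla_normB _ _) _; lra.
Qed.

Definition effect_close n k (phi psi : B -> Cx R) (e : R) :=
  forall u, local_effect n k u -> cabs (phi u - psi u) <= e.

Definition effect_controlled n k b := exists2 C : R, 0 <= C &
  forall phi psi, is_state phi -> is_state psi ->
  forall e, effect_close n k phi psi e -> cabs (phi b - psi b) <= C * e.

Lemma effect_controlled_effect {n k u} :
  local_effect n k u -> effect_controlled n k u.
Proof. by move=> eu; exists 1 => // phi psi _ _ e close; rewrite mul1r close. Qed.

Lemma effect_controlledZ {n k} a {b} :
  effect_controlled n k b -> effect_controlled n k (a *: b).
Proof.
case=> C C_ge0 HC; exists (cabs a * C) => [|phi psi sphi spsi e close].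
  by rewrite mulr_ge0 ?cabs_ge0.
rewrite (stateZ sphi) (stateZ spsi) -mulrBr cabsM -mulrA.
by rewrite ler_wpM2l ?cabs_ge0 ?HC.
Qed.

Lemma effect_controlledD {n k b1 b2} : effect_controlled n k b1 ->
  effect_controlled n k b2 -> effect_controlled n k (b1 + b2).
Proof.
case=> C1 C1_ge0 H1 [C2 C2_ge0 H2].
exists (C1 + C2) => [|phi psi sphi spsi e close]; first exact: addr_ge0.
rewrite (stateD sphi) (stateD spsi) opprD addrACA mulrDl.
by apply: le_trans (ler_cabsD _ _) _; apply: lerD; [apply: H1 | apply: H2].
Qed.

Lemma effect_controlled_selfadjoint {n k s} :
  is_local n k s -> star s = s -> effect_controlled n k s.
Proof.
move=> ls s_sa; set h : Cx R := ((2^-1 : R)%:C)%C.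
pose t : R := (4 * (nrm s + 1))^-1.
have ns_ge0 := qla_norm_ge0 _ _ B s.
have t_gt0 : 0 < t by rewrite invr_gt0 mulr_gt0 // ltr_wpDl.
have ts_le : nrm ((t%:C)%C *: s) <= 4^-1.
  have t_inv : t * (4 * (nrm s + 1)) = 1 by rewrite mulVf // gt_eqF // mulr_gt0 // ltr_wpDl.
  rewrite qla_normZr ger0_norm ?ltW //; nra.
have ts_sa : star ((t%:C)%C *: s) = (t%:C)%C *: s.
  by rewrite qla_starZ conjC_real s_sa.
have l0 : is_local n k (0 : B) by rewrite -(scale0r 1); apply/is_localZ/is_local1.
have u1 := local_effect_half_shift (is_localZ _ ls) ts_sa ts_le.
have u0 : local_effect n k (h *: 1 + 0).
  by apply: local_effect_half_shift l0 qla_star0 _; rewrite qla_norm0 invr_ge0 ler0n.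
rewrite addr0 in u0.
have -> : s = ((t^-1)%:C)%C *: ((h *: 1 + (t%:C)%C *: s) + (-1) *: (h *: 1)).
  by rewrite scaleN1r addrC addKr scalerA -rmorphM mulVf ?gt_eqF // scale1r.
apply: effect_controlledZ; apply: effect_controlledD.
  exact: effect_controlled_effect.
by apply: effect_controlledZ; apply: effect_controlled_effect.
Qed.

Lemma effect_controlled_local {n k b} : is_local n k b -> effect_controlled n k b.
Proof.
move=> lb; set h : Cx R := ((2^-1 : R)%:C)%C.
have -> : b = h *: (b + star b) + 'i *: ((- 'i * h) *: (b - star b)).
  rewrite scalerA mulrA mulrN -expr2 sqrCi opprK mul1r -scalerDr.
  by rewrite addrACA subrr addr0 scalerDr -scalerDl halfCD scale1r.
apply: effect_controlledD; last apply: effect_controlledZ.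
  apply: effect_controlled_selfadjoint.
    by apply: is_localZ; apply: is_localD lb (is_local_star lb).
  by rewrite qla_starZ conjC_real qla_starD qla_starK addrC.
apply: effect_controlled_selfadjoint.
  by apply: is_localZ; apply: is_localB lb (is_local_star lb).
rewrite qla_starZ qla_starB qla_starK rmorphM rmorphN /= conjCi conjC_real opprK.
by rewrite -opprB scalerN -scaleNr mulNr.
Qed.

End LocalEffects.

Section Configurations.
Context {A : finType}.
Implicit Types (x y z : confs A) (N : nat).

Definition cyl x N : set (confs A) :=
  [set y | forall i : int, - (N%:Z) <= i <= N%:Z -> x i = y i].

Lemma cyl_mono {x M N} : (M <= N)%N -> cyl x N `<=` cyl x M.
Proof. by move=> MN y xy i iM; apply: xy; lia. Qed.

Lemma coord_nbhs x (i : int) : nbhs x [set y : confs A | x i = y i].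
Proof.
have -> : [set y : confs A | x i = y i] = proj i @^-1` [set x i].
  by rewrite /proj; apply/seteqP; split => y /= ->.
exact: (@proj_continuous int (fun _ => discrete_topology A) i x _ (discrete_set1 _)).
Qed.

Lemma cyl_nbhs x N : nbhs x (cyl x N).
Proof.
elim: N => [|N IH].
  by apply: filterS (coord_nbhs x 0) => y x0y i i0; have -> : i = 0 by lia.
apply: filterS (filterI IH (filterI (coord_nbhs x N.+1) (coord_nbhs x (- N.+1%:Z)))).
move=> y [xy [xy_r xy_l]] i iN.
have [/eqP -> //|i_neq_r] := boolP (i == N.+1%:Z).
have [/eqP -> //|i_neq_l] := boolP (i == - N.+1%:Z).
by apply: xy; lia.
Qed.

Lemma nbhs_cyl x U : nbhs x U -> exists N, cyl x N `<=` U.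
Proof.
pose G := filter_from [set: nat] (cyl x).
have G_filter : Filter G.
  apply: filter_from_filter; first by exists 0%N.
  move=> M N _ _; exists (maxn M N) => // y xy.
  by split; apply: cyl_mono xy; rewrite ?leq_maxl ?leq_maxr.
suff : G --> x by move=> /(_ U) GU /GU [N _ NU]; exists N.
apply/cvg_sup => i V [W] [[Z] oZ <-] ZfN WV.
exists `|i|%N => // y xy; apply: WV => /=.
by rewrite -(xy i) //; lia.
Qed.

Lemma confs_compact : compact [set: confs A].
Proof.
have := @tychonoff int (fun _ => discrete_topology A) (fun _ => setT)
  (fun _ => @finite_compact (discrete_topology A) _ (@finite_finset A setT)).
by rewrite (_ : [set f | _] = setT) //; apply/seteqP; split.
Qed.

Lemma continuous_cylP {R : realType} (f : confs A -> Cx R) :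
  continuous f <-> forall x (e : R), 0 < e ->
    exists N, forall y, cyl x N y -> cabs (f x - f y) <= e.
Proof.
split=> [f_cont x e e_gt0 | f_cyl x].
  have eC_gt0 : 0 < (e%:C)%C :> Cx R by rewrite ltcR.
  have /nbhs_cyl [N xNU] := (@cvgrPdist_le _ _ _ (nbhs x) (nbhs_filter x) f (f x)).1 (f_cont x) _ eC_gt0.
  by exists N => y /xNU /=; rewrite -cabsE lecR.
apply/(@cvgrPdist_lt _ _ _ (nbhs x) (nbhs_filter x)) => eps; rewrite ltcE => /andP [/eqP eps_im eps_re].
have [N HN] := f_cyl x _ (divr_gt0 eps_re (ltr0n _ 2)).
apply: filterS (cyl_nbhs x N) => y /HN fxy.
rewrite -cabsE ltcE /= eps_im eqxx /=.
by apply: le_lt_trans fxy _; rewrite ltr_pdivrMr // ltr_pMr // ltr1n.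
Qed.

Lemma continuous_cyl_uniform {R : realType} (f : confs A -> Cx R) :
  continuous f -> forall e : R, 0 < e ->
    \forall N \near \oo, forall x y, cyl x N y -> cabs (f x - f y) <= e.
Proof.
move=> /continuous_cylP f_cyl e e_gt0.
suff : \forall N \near \oo, [set: confs A] `<=`
    (fun x => forall y, cyl x N y -> cabs (f x - f y) <= e).
  by apply: filterS => N cover x; apply: cover.
apply: ((compact_near_coveringP _).1 confs_compact nat \oo
  (fun N x => forall y, cyl x N y -> cabs (f x - f y) <= e) _) => x _.
have [M HM] := f_cyl x _ (divr_gt0 e_gt0 (ltr0n _ 2)).
exists (cyl x M, [set N | (M <= N)%N]); first by split; [exact: cyl_nbhs | exists M].
case=> x' N [/= xx' MN] y x'y.
have xy : cyl x M y by move=> i iM; rewrite xx' //; exact: (cyl_mono MN _ x'y i iM).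
have -> : f x' - f y = (f x - f y) - (f x - f x') by ring.
apply: le_trans (ler_cabsB _ _) _; have := HM _ xx'; have := HM _ xy; lra.
Qed.

End Configurations.

Lemma sup_le_ub {R : realType} (S : set R) (e : R) :
  0 <= e -> ubound S e -> sup S <= e.
Proof.
have [->|/eqP/set0P S_neq0] := pselect (S = set0); first by rewrite sup0.
by move=> _; apply: ge_sup.
Qed.

Lemma sup_ge0 {R : realType} (S : set R) :
  (forall r, S r -> 0 <= r) -> has_ubound S -> 0 <= sup S.
Proof.
have [->|/eqP/set0P [r Sr]] := pselect (S = set0); first by rewrite sup0.
by move=> S_ge0 S_ub; apply: le_trans (S_ge0 _ Sr) (ub_le_sup S_ub Sr).
Qed.

Section Oscillation.
Context {R : realType} {d : nat} {B : quasi_local_algebra R d} {A : finType}.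
Variable W : confs A -> B -> Cx R.
Hypothesis W_state : forall x, is_state (W x).
Local Notation nrm := (qla_norm B).
Implicit Types (b : B) (n : nat) (x y : confs A).

Lemma channel_diff_le b x y : cabs (W x b - W y b) <= 4 * nrm b.
Proof.
apply: le_trans (ler_cabsB _ _) _.
have := state_norm_le (W_state x) b; have := state_norm_le (W_state y) b; lra.
Qed.

Lemma osc_ge b {n x y} : cyl x n y -> cabs (W x b - W y b) <= osc W b n.
Proof.
move=> xy; apply: ub_le_sup; last by exists x, y.
by exists (4 * nrm b) => _ [x' [y' [_ ->]]]; apply: channel_diff_le.
Qed.

Lemma osc_ge0 b n : 0 <= osc W b n.
Proof.
apply: sup_ge0 => [_ [x [y [_ ->]]]|]; first exact: cabs_ge0.
by exists (4 * nrm b) => _ [x' [y' [_ ->]]]; apply: channel_diff_le.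
Qed.

Lemma osc_le b n (e : R) : 0 <= e ->
  (forall x y, cyl x n y -> cabs (W x b - W y b) <= e) -> osc W b n <= e.
Proof. by move=> e_ge0 le_e; apply: sup_le_ub => // _ [x [y [xy ->]]]; apply: le_e. Qed.

Lemma continuous_osc_cvg0 b :
  continuous (K W b) -> osc W b n @[n --> \oo] --> (0 : R).
Proof.
move=> /continuous_cyl_uniform Kb_unif; apply/cvgrPdist_le => e e_gt0.
near=> n; rewrite sub0r normrN ger0_norm ?osc_ge0 //.
by apply: osc_le; [exact: ltW | near: n; exact: Kb_unif].
Unshelve. all: by end_near.
Qed.

Lemma osc_cvg0_continuous b :
  osc W b n @[n --> \oo] --> (0 : R) -> continuous (K W b).
Proof.
move=> /cvgrPdist_le osc0; apply/continuous_cylP => x e e_gt0.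
have [N _ oscN] := osc0 e e_gt0.
exists N => y xy; apply: le_trans (osc_ge b xy) _.
by have := oscN N (leqnn N); rewrite /= sub0r normrN; apply: le_trans; apply: ler_norm.
Qed.

Lemma DIMA_effect_close (n : int) (k : nat) {e : R} : DIMA W -> 0 < e ->
  exists N, forall x y, cyl x N y -> effect_close n k (W x) (W y) e.
Proof.
move=> W_dima e_gt0; have [m0 [a0 W_mem]] := W_dima e e_gt0.
exists (addn (absz (n - m0%:Z)) (absz (n + k%:Z + a0%:Z))) => x y xy u [lu pu pu1].
by apply: (W_mem n k u lu pu pu1 m0 a0) => // i iI; apply: xy; lia.
Qed.

Lemma DIMA_local_cyl {n : int} {k : nat} {b} {e : R} :
  DIMA W -> is_local n k b -> 0 < e ->
  exists N, forall x y, cyl x N y -> cabs (W x b - W y b) <= e.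
Proof.
move=> W_dima /effect_controlled_local [C C_ge0 b_ctrl] e_gt0.
have C1_gt0 : 0 < C + 1 by rewrite ltr_wpDl.
have [N close] := DIMA_effect_close n k W_dima (divr_gt0 e_gt0 C1_gt0).
exists N => x y xy.
apply: le_trans (b_ctrl _ _ (W_state x) (W_state y) _ (close x y xy)) _.
have eC : e / (C + 1) * (C + 1) = e by rewrite divfK // gt_eqF.
have := divr_gt0 e_gt0 C1_gt0; nra.
Qed.

Lemma DIMA_continuous b : DIMA W -> continuous (K W b).
Proof.
move=> W_dima; apply/continuous_cylP => x e e_gt0.
have [n [k [M bM]]] := qla_dense _ _ B b _ (divr_gt0 e_gt0 (ltr0n _ 8)).
set b0 := qla_loc B n k M in bM.
have lb0 : is_local n k b0 by exists M.
have [N b0_close] := DIMA_local_cyl W_dima lb0 (divr_gt0 e_gt0 (ltr0n _ 2)).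
exists N => y xy.
have -> : K W b x - K W b y = W x (b - b0) + (W x b0 - W y b0) - W y (b - b0).
  by rewrite /K (stateB (W_state x)) (stateB (W_state y)); ring.
have x_le := state_norm_le (W_state x) (b - b0).
have y_le := state_norm_le (W_state y) (b - b0).
have b0_le := b0_close x y xy.
apply: le_trans (ler_cabsB _ _) _.
have := ler_cabsD (W x (b - b0)) (W x b0 - W y b0); lra.
Qed.

End Oscillation.

Theorem lemma3 (R : realType) (A : finType) (d : nat)
    (B : quasi_local_algebra R d) (W : confs A -> B -> Cx R) :
  cq_channel W ->
  ((forall b : B, continuous (K W b)) <->
     (forall b : B, osc W b n @[n --> \oo] --> (0 : R))) /\
  (DIMA W -> forall b : B, continuous (K W b)).
Proof.
move=> [_ W_state]; split; first split.
- by move=> Kb_cont b; apply: continuous_osc_cvg0.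
- by move=> osc0 b; apply: osc_cvg0_continuous.
- by move=> W_dima b; apply: DIMA_continuous.
Qed.
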